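(* Assume the setting described in the context. For any word $W$ over $F$ there exists a sequence of valid swaps transforming $W$ into a $\pi$-stable word.
   Context: Setting: $F$ is a finite set with a symmetric relation $\sim$ (loops allowed), $\Gamma(f)=\{g:f\sim g\}$, $\Gamma^+(f)=\Gamma(f)\cup\{f\}$ and $\Gamma^+(S)=\bigcup_{f\in S}\Gamma^+(f)$. Write $f\cong g$ if $f\sim g$ or $f=g$. $S\subseteq F$ is independent if $f\not\sim g$ for distinct $f,g\in S$; $\mathrm{Ind}(F)$ is the family of independent sets. $\pi$ is a permutation of $F$ inducing a total order $\preceq_\pi$. A word is a finite sequence of elements of $F$. A valid swap on a word replaces two adjacent letters $fg$ by $gf$, provided $f\not\cong g$. A sequence $(I_1,\ldots,I_s)$, $s\ge1$, is stable if $I_r\in\mathrm{Ind}(F)$ and $I_{r+1}\subseteq\Gamma^+(I_r)$ for $r\in[s-1]$. A word $W$ is stable if it can be partitioned as $W=W_1\ldots W_s$ into nonempty words, each consisting of distinct letters, such that $(I_1,\ldots,I_s)$ is stable, where $I_r$ is the set of letters of $W_r$. It is $\pi$-stable if in addition each $W_r$ is strictly $\prec_\pi$-increasing. The empty word is regarded as $\pi$-stable. *)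

From mathcomp Require Import all_boot all_order all_fingroup.
Set Implicit Arguments. Unset Strict Implicit. Unset Printing Implicit Defensive.

Section Defs.
Variable F : finType.
Variable rel_F : rel F.   (* the symmetric relation ~ (loops allowed) *)

Definition cong (f g : F) : bool := rel_F f g || (f == g).

Definition GammaPlus (S : {set F}) : {set F} :=
  [set g | [exists f in S, cong f g]].

Definition independent (S : {set F}) : Prop :=
  forall f g, f \in S -> g \in S -> f != g -> ~~ rel_F f g.

Definition stable_seq (Is : seq {set F}) : Prop :=
  Is != [::] /\
  (forall I, I \in Is -> independent I) /\
  (forall r, r.+1 < size Is -> nth set0 Is r.+1 \subset GammaPlus (nth set0 Is r)).

Definition valid_swap (W W' : seq F) : Prop :=
  exists u v f g, W = u ++ f :: g :: v /\ W' = u ++ g :: f :: v /\ ~~ cong f g.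

Inductive swaps : seq F -> seq F -> Prop :=
| swaps_refl W : swaps W W
| swaps_step W1 W2 W3 : valid_swap W1 W2 -> swaps W2 W3 -> swaps W1 W3.

(* The total order induced by pi : f ≺_pi g iff f occurs before g in the listing
   (pi x_1, ..., pi x_n), where x_1,...,x_n is the canonical enumeration of F. *)
Definition prec_pi (pi : {perm F}) (f g : F) : bool :=
  (enum_rank ((pi^-1)%g f) < enum_rank ((pi^-1)%g g))%N.

Definition stable_word (W : seq F) : Prop :=
  exists Ws : seq (seq F),
    flatten Ws = W /\
    (forall w, w \in Ws -> w != [::] /\ uniq w) /\
    stable_seq [seq [set x in w] | w <- Ws].

Definition pi_stable_word (pi : {perm F}) (W : seq F) : Prop :=
  W = [::] \/
  exists Ws : seq (seq F),
    flatten Ws = W /\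
    (forall w, w \in Ws -> w != [::] /\ uniq w /\ sorted (prec_pi pi) w) /\
    stable_seq [seq [set x in w] | w <- Ws].

End Defs.

From mathcomp Require Import all_boot all_order all_fingroup.
Set Implicit Arguments. Unset Strict Implicit. Unset Printing Implicit Defensive.

(* Read W from left to right, maintaining a rearrangement of the prefix read
   so far into a pi-stable block decomposition.  A new letter x slides left,
   by valid swaps, across every block containing no letter congruent to x;
   let B_r be the last block that does contain one.  If a block B_{r+1}
   follows it, x joins B_{r+1} at its pi-sorted place: the block stays
   independent, it still lies in Gamma^+(B_r) because x does, and enlarging
   it only enlarges Gamma^+(B_{r+1}).  Otherwise x forms a new last block
   [x], which lies in Gamma^+(B_r). *)

Lemma split_last_has (T : Type) (p : pred T) (s : seq T) :
  all (predC p) s \/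
  exists s1 y s2, [/\ s = rcons s1 y ++ s2, p y & all (predC p) s2].
Proof.
elim/last_ind: s => [|s y IHs]; first by left.
case py: (p y).
  by right; exists s, y, [::]; rewrite cats0.
case: IHs => [Hs | [s1 [z [s2 [-> pz Hs2]]]]].
  by left; rewrite all_rcons /= py.
by right; exists s1, z, (rcons s2 y); rewrite rcons_cat all_rcons /= py.
Qed.

Section InsertSorted.
Variables (T : eqType) (lt : rel T).

Definition insert_sorted (x : T) (s : seq T) : seq T :=
  let n := find (fun y => ~~ lt y x) s in take n s ++ x :: drop n s.

Lemma perm_insert_sorted x s : perm_eq (insert_sorted x s) (x :: s).
Proof. by rewrite /insert_sorted -cat1s perm_catCA cat_take_drop. Qed.

Lemma sorted_cat_cons_all t x d :
  sorted lt t -> all (lt^~ x) t -> path lt x d -> sorted lt (t ++ x :: d).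
Proof.
move=> st tx xd; rewrite sorted_cat_cons xd andbT.
case: t st tx => [//|a t] st /allP tx.
by rewrite /= rcons_path [path _ _ _]st tx ?mem_last.
Qed.

Hypothesis lt_total : forall a b, a != b -> lt a b || lt b a.

Lemma sorted_insert_sorted x s :
  sorted lt s -> x \notin s -> sorted lt (insert_sorted x s).
Proof.
move=> ss xs; rewrite /insert_sorted; set n := find _ s.
apply: sorted_cat_cons_all; first exact: take_sorted.
  have : ~~ has (fun y => ~~ lt y x) (take n s).
    by apply/negP => /find_ltn; rewrite ltnn.
  by rewrite -all_predC; apply: sub_all => y /= /negPn.
have [ns|/drop_oversize -> //] := ltnP n (size s).
have := drop_sorted n ss; rewrite (drop_nth x ns) /= => ->; rewrite andbT.
have nzx : ~~ lt (nth x s n) x.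
  by apply: (@nth_find _ x (fun y => ~~ lt y x)); rewrite has_find.
have /lt_total : nth x s n != x by apply: contraNneq xs => <-; apply: mem_nth.
by rewrite (negbTE nzx).
Qed.

End InsertSorted.

Section Swaps.
Variables (F : finType) (rel_F : rel F).

Local Notation cong := (cong rel_F).
Local Notation swaps := (swaps rel_F).

Definition touches (x : F) (w : seq F) : bool := has (fun y => cong y x) w.

Lemma swaps_trans A B C : swaps A B -> swaps B C -> swaps A C.
Proof. by elim=> [//|W1 W2 W3 H _ IH] /IH; apply: swaps_step. Qed.

Lemma swaps_catr A B t : swaps A B -> swaps (A ++ t) (B ++ t).
Proof.
elim=> [W|W1 W2 W3 [u [v [f [g [-> [-> fg]]]]]] _ IH]; first exact: swaps_refl.
by apply: swaps_step IH; exists u, (v ++ t), f, g; rewrite -!catA.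
Qed.

Lemma swaps_pull_left s u v x :
  ~~ touches x s -> swaps (u ++ s ++ x :: v) (u ++ x :: s ++ v).
Proof.
elim: s u => [|y s IHs] u /=; first by move=> _; apply: swaps_refl.
rewrite negb_or => /andP [yx sx].
have := IHs (rcons u y) sx; rewrite !cat_rcons => /swaps_trans; apply.
by apply: swaps_step (swaps_refl _ _); exists u, (s ++ v), y, x.
Qed.

Lemma swaps_insert_block (lt : rel F) pre B post x :
  all (predC (touches x)) (B :: post) ->
  swaps (flatten (pre ++ B :: post) ++ [:: x])
        (flatten (pre ++ insert_sorted lt x B :: post)).
Proof.
move=> /allP Hpost; rewrite !flatten_cat /= /insert_sorted; set n := find _ B.
rewrite -{1}(cat_take_drop n B) -!catA /=.
have := @swaps_pull_left (drop n B ++ flatten post) (flatten pre ++ take n B) [::] x.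
rewrite cats0 -!catA; apply; apply/hasPn => y.
rewrite mem_cat => /orP [/mem_drop yB | /flattenP [w wpost yw]].
  by apply: (hasPn (Hpost B (mem_head _ _))).
by apply: (hasPn (Hpost w _)); rewrite // inE wpost orbT.
Qed.

End Swaps.

Section Blocks.
Variables (F : finType) (rel_F : rel F).
Hypothesis rel_sym : symmetric rel_F.
Variable pi : {perm F}.

Local Notation cong := (cong rel_F).
Local Notation touches := (touches rel_F).
Local Notation GammaPlus := (GammaPlus rel_F).
Local Notation independent := (independent rel_F).
Local Notation lt := (prec_pi pi).

Lemma prec_pi_total a b : a != b -> lt a b || lt b a.
Proof.
move=> ab; rewrite /prec_pi -neq_ltn.
by apply: contra ab => /eqP/val_inj/enum_rank_inj/perm_inj ->.
Qed.

Lemma independent_setU1 x (S : {set F}) :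
  independent S -> {in S, forall y, ~~ rel_F y x} -> independent (x |: S).
Proof.
move=> indS Sx f g; rewrite !in_setU1.
case/predU1P=> [-> | fS]; case/predU1P=> [-> | gS] //; first by rewrite eqxx.
- by rewrite rel_sym Sx.
- by rewrite Sx.
exact: indS.
Qed.

Lemma mem_GammaPlus x w : (x \in GammaPlus [set y in w]) = touches x w.
Proof.
rewrite inE; apply/existsP/hasP => [[f /andP [fw fx]] | [f fw fx]].
  by exists f; rewrite // inE in fw.
by exists f; rewrite ?inE fw.
Qed.

Lemma GammaPlusS (A B : {set F}) : A \subset B -> GammaPlus A \subset GammaPlus B.
Proof.
move/subsetP=> AB; apply/subsetP=> y; rewrite !inE => /existsP [f /andP [fA fy]].
by apply/existsP; exists f; rewrite AB.
Qed.

Definition pi_block (w : seq F) : Prop :=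
  [/\ w != [::], uniq w, sorted lt w & independent [set y in w]].

Definition follows (B C : seq F) : bool :=
  [set y in C] \subset GammaPlus [set y in B].

Definition pi_blocks (Ws : seq (seq F)) : Prop :=
  {in Ws, forall w, pi_block w} /\ sorted follows Ws.

Lemma pi_block1 x : pi_block [:: x].
Proof. by split=> // f g; rewrite !inE => /eqP -> /eqP ->; rewrite eqxx. Qed.

Lemma pi_block_insert x B :
  pi_block B -> ~~ touches x B -> pi_block (insert_sorted lt x B).
Proof.
case=> _ uB sB indB /hasPn Bx.
have xB : x \notin B by apply/negP => /Bx; rewrite /cong eqxx orbT.
have permB := perm_insert_sorted lt x B.
split.
- by rewrite /insert_sorted; case: take.
- by rewrite (perm_uniq permB) /= xB.
- exact: sorted_insert_sorted prec_pi_total _ _ sB xB.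
have -> : [set y in insert_sorted lt x B] = x |: [set y in B].
  by rewrite -set_cons; apply/setP => y; rewrite !inE (perm_mem permB).
apply: independent_setU1 => // y; rewrite inE => /Bx.
by rewrite negb_or => /andP [].
Qed.

Lemma follows_cons L x B : follows L (x :: B) = touches x L && follows L B.
Proof.
rewrite /follows (set_cons x B : [set y in x :: B] = _).
by rewrite subUset sub1set mem_GammaPlus.
Qed.

Lemma follows_nil L : follows L [::].
Proof. by apply/subsetP => y; rewrite inE. Qed.

Lemma follows_perm L C C' : perm_eq C C' -> follows L C = follows L C'.
Proof.
move=> CC'; rewrite /follows (_ : [set y in C] = [set y in C']) //.
by apply/setP => y; rewrite !inE (perm_mem CC').
Qed.

Lemma follows_subl B B' C : {subset B <= B'} -> follows B C -> follows B' C.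
Proof.
move=> BB' /subset_trans; apply; apply: GammaPlusS.
by apply/subsetP => y; rewrite !inE => /BB'.
Qed.

Lemma pi_blocks_cons L B Ws :
  pi_blocks [:: L, B & Ws] <-> [/\ pi_block L, follows L B & pi_blocks (B :: Ws)].
Proof.
split=> [[Hb /= /andP [LB HWs]] | [HL LB [Hb HWs]]].
  split=> //; first by apply: Hb; rewrite mem_head.
  by split=> // w w_in; apply: Hb; rewrite inE w_in orbT.
split; last by rewrite /= LB.
by move=> w; rewrite inE => /predU1P [-> | /Hb].
Qed.

Lemma pi_blocks_cat_cons s L t :
  pi_blocks (s ++ L :: t) <-> pi_blocks (rcons s L) /\ pi_blocks (L :: t).
Proof.
rewrite /pi_blocks sorted_cat_cons.
split=> [[Hb /andP [Hs Ht]] | [[Hb1 Hs] [Hb2 Ht]]].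
  split; split=> // w w_in; apply: Hb; rewrite mem_cat.
    by move: w_in; rewrite mem_rcons inE => /predU1P [-> | ->]; rewrite ?mem_head ?orbT.
  by rewrite w_in orbT.
split; last by rewrite Hs.
move=> w; rewrite mem_cat => /orP [w_s | /Hb2 //].
by apply: Hb1; rewrite mem_rcons inE w_s orbT.
Qed.

Lemma pi_blocks_insert_head x B Ws :
  pi_blocks (B :: Ws) -> ~~ touches x B -> pi_blocks (insert_sorted lt x B :: Ws).
Proof.
move=> [Hb HWs] Bx; split.
  move=> w; rewrite inE => /predU1P [-> | w_in].
    by apply: pi_block_insert => //; apply: Hb; rewrite mem_head.
  by apply: Hb; rewrite inE w_in orbT.
case: Ws Hb HWs => [//|C Ws] _ /= /andP [BC ->]; rewrite andbT.
apply: follows_subl BC => y.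
by rewrite (perm_mem (perm_insert_sorted lt x B)) inE => ->; rewrite orbT.
Qed.

Lemma pi_blocks_insert_after s L B Ws x :
  pi_blocks (s ++ [:: L, B & Ws]) -> touches x L -> ~~ touches x B ->
  pi_blocks (s ++ [:: L, insert_sorted lt x B & Ws]).
Proof.
move=> /pi_blocks_cat_cons [Hs /pi_blocks_cons [HL LB HB]] Lx Bx.
apply/pi_blocks_cat_cons; split=> //; apply/pi_blocks_cons; split=> //.
  by rewrite (follows_perm _ (perm_insert_sorted lt x B)) follows_cons Lx.
exact: pi_blocks_insert_head.
Qed.

Lemma pi_blocks_rcons1 s L x :
  pi_blocks (rcons s L) -> touches x L -> pi_blocks (rcons (rcons s L) [:: x]).
Proof.
move=> HsL Lx; rewrite -cats1 cat_rcons; apply/pi_blocks_cat_cons.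
split=> //; apply/pi_blocks_cons; split.
- by case: HsL => Hb _; apply: Hb; rewrite mem_rcons mem_head.
- by rewrite follows_cons Lx follows_nil.
by split=> // w; rewrite inE => /eqP ->; apply: pi_block1.
Qed.

Lemma pi_blocks_rcons_letter Ws x :
  pi_blocks Ws ->
  exists Ws', swaps rel_F (flatten Ws ++ [:: x]) (flatten Ws') /\ pi_blocks Ws'.
Proof.
move=> HWs; have [Hall | [s [L [t [Ws_eq Lx Hall]]]]] := split_last_has (touches x) Ws.
  case: Ws HWs Hall => [_ _ | B Ws HWs Hall].
    exists [:: [:: x]]; split; first exact: swaps_refl.
    by split=> // w; rewrite inE => /eqP ->; apply: pi_block1.
  exists (insert_sorted lt x B :: Ws); split; first exact: (swaps_insert_block lt [::]).
  by apply: pi_blocks_insert_head => //; case/andP: Hall.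
rewrite {}Ws_eq in HWs *; case: t Hall HWs => [_ | B t Hall HWs].
  exists (rcons (rcons s L) [:: x]); split.
    by rewrite cats0 !flatten_rcons; apply: swaps_refl.
  by apply: pi_blocks_rcons1 => //; rewrite cats0 in HWs.
exists (rcons s L ++ insert_sorted lt x B :: t); split; first exact: swaps_insert_block.
rewrite cat_rcons in HWs; rewrite cat_rcons; apply: pi_blocks_insert_after => //.
by case/andP: Hall.
Qed.

Lemma pi_stable_word_flatten Ws : pi_blocks Ws -> pi_stable_word rel_F pi (flatten Ws).
Proof.
case: Ws => [|w0 Ws] [Hb HWs]; [by left | right].
exists (w0 :: Ws); split=> //; split; first by move=> w /Hb [].
split=> //; split; first by move=> I /mapP [w /Hb [] _ _ _ indw ->].
move=> r; rewrite size_map => r_lt.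
rewrite (nth_map [::]) // (nth_map [::]) 1?ltnW //.
exact: (sortedP [::] HWs).
Qed.

End Blocks.

Theorem lemma4 (F : finType) (rel_F : rel F) (rel_sym : symmetric rel_F)
  (pi : {perm F}) (W : seq F) :
  exists W' : seq F, swaps rel_F W W' /\ pi_stable_word rel_F pi W'.
Proof.
have [Ws [WWs HWs]] : exists Ws, swaps rel_F W (flatten Ws) /\ pi_blocks rel_F pi Ws.
  elim/last_ind: W => [|W x [Ws [WWs HWs]]].
    by exists [::]; split; [apply: swaps_refl | split].
  have [Ws' [WsWs' HWs']] := pi_blocks_rcons_letter rel_sym x HWs.
  exists Ws'; split=> //; rewrite -cats1.
  exact: swaps_trans (swaps_catr _ WWs) WsWs'.
by exists (flatten Ws); split=> //; apply: pi_stable_word_flatten.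
Qed.
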